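(* Every connected graph $G$ of order $n \ge 3$ is an induced subgraph of a locally Dirac graph.
   Context: A graph $H$ is locally Dirac if for every vertex $v \in V(H)$ and every $u \in N(v)$, $\deg_{\langle N(v)\rangle}(u) \ge \deg_H(v)/2$, where $N(v)$ is the open neighbourhood of $v$ and $\langle N(v)\rangle$ the subgraph induced by it (i.e. $\langle N(v)\rangle$ satisfies Dirac's minimum degree condition for every $v$). *)

From mathcomp Require Import all_boot.
Set Implicit Arguments. Unset Strict Implicit. Unset Printing Implicit Defensive.

Definition simple_graph (T : finType) (e : rel T) : Prop :=
  symmetric e /\ irreflexive e.

Definition connected_graph (T : finType) (e : rel T) : Prop :=
  forall x y : T, connect e x y.

Definition nbhd (T : finType) (e : rel T) (v : T) : {set T} := [set u | e v u].

Definition deg_in_nbhd (T : finType) (e : rel T) (v u : T) : nat :=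
  #|[set w in nbhd e v | e u w]|.

(* locally Dirac: for all v and u in N(v), deg_<N(v)>(u) >= deg(v)/2,
   written without division as deg(v) <= 2 * deg_<N(v)>(u). *)
Definition locally_dirac (T : finType) (e : rel T) : Prop :=
  forall v u : T, u \in nbhd e v -> #|nbhd e v| <= 2 * deg_in_nbhd e v u.

Definition induced_subgraph (T U : finType) (e : rel T) (h : rel U) : Prop :=
  exists f : T -> U, injective f /\ forall x y : T, h (f x) (f y) = e x y.

From mathcomp Require Import all_boot.
From mathcomp Require Import zify.

(* Join G with a clique K on n + 3 vertices. The vertices of K are adjacent to
   all other vertices, so any two adjacent vertices have at least n + 1 common
   neighbours, while every degree is below 2n + 3; hence every neighbourhood
   satisfies Dirac's condition. *)

Lemma locally_dirac_of_universal {U : finType} {h : rel U} (D : {set U}) :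
  irreflexive h -> (forall d w, d \in D -> w != d -> h w d) ->
  #|U| + 3 <= 2 * #|D| -> locally_dirac h.
Proof.
move=> hirr hD cardD v u; rewrite inE => hvu.
have deg_lt : #|nbhd h v| < #|U|.
  rewrite -cardsT; apply: proper_card; apply/properP; split; first exact: subsetT.
  by exists v; rewrite ?in_setT // inE hirr.
have common : #|D :\ u :\ v| <= deg_in_nbhd h v u.
  apply: subset_leq_card; apply/subsetP => w; rewrite !inE => /and3P[wv wu wD].
  by rewrite !hD // eq_sym.
have := cardsD1 u D; have := cardsD1 v (D :\ u); lia.
Qed.

Definition join_clique (T S : finType) (e : rel T) : rel (T + S) :=
  fun a b => if (a, b) is (inl x, inl y) then e x y else a != b.

Arguments join_clique {T} S e.

Section JoinClique.
Variables (T S : finType) (e : rel T).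

Lemma join_clique_simple : simple_graph e -> simple_graph (join_clique S e).
Proof.
move=> [esym eirr]; split.
- by case=> [x|i] [y|j]; rewrite /join_clique 1?esym // eq_sym.
- by case=> [x|i]; rewrite /join_clique ?eirr ?eqxx.
Qed.

Lemma join_clique_universal d w :
  d \in [set inr j | j : S] -> w != d -> join_clique S e w d.
Proof. by move=> /imsetP[j _ ->]; case: w. Qed.

Lemma induced_join_clique : induced_subgraph e (join_clique S e).
Proof. by exists inl; split=> // x y []. Qed.

Lemma locally_dirac_join_clique :
  simple_graph e -> #|T| + 3 <= #|S| -> locally_dirac (join_clique S e).
Proof.
move=> simple_e cardS; have [_ hirr] := join_clique_simple simple_e.
apply: (locally_dirac_of_universal [set inr j | j : S] hirr).
  exact: join_clique_universal.
rewrite card_sum card_imset; last by move=> ? ? [].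
by rewrite addnAC mul2n -addnn leq_add2r.
Qed.

End JoinClique.

Theorem mainTheorem3 (T : finType) (e : rel T) :
  simple_graph e -> connected_graph e -> 3 <= #|T| ->
  exists (U : finType) (h : rel U),
    simple_graph h /\ locally_dirac h /\ induced_subgraph e h.
Proof.
move=> simple_e _ _.
exists (T + 'I_(#|T| + 3))%type, (join_clique _ e).
split; first exact: join_clique_simple.
split; last exact: induced_join_clique.
by apply: locally_dirac_join_clique; rewrite ?card_ord.
Qed.
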